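(* $G^{p}$ is a subspace of $L^{p}(\mu)$.
   Context: Let $\mathcal{B}$ be the Borel $\sigma$-algebra of $\mathbb{R}$, $\lambda$ the Lebesgue measure, and $\mathcal{B}_{\infty}$ the $\sigma$-algebra on $\mathbb{R}^{\mathbb{N}}$ generated by the cylinder sets $\prod_{i=1}^{m}C_{i}\times\prod_{i=m+1}^{\infty}\mathbb{R}$ with $C_i\in\mathcal{B}$, $m\in\mathbb{N}$. Let $\mathcal{F}(\mathcal{B},\lambda)$ be the set of finite rectangles $\prod_{i\in\mathbb{N}}C_{i}$ with $C_i\in\mathcal{B}$ and $\prod_{i}\lambda(C_i)\in[0,\infty)$, with $\mathrm{vol}(\prod_{i}C_i):=\prod_i\lambda(C_i)$. The measure $\mu$ is the restriction to $\mathcal{B}_{\infty}$ of the outer measure $\mu^{\ast}(A):=\inf\{\sum_{n}\mathrm{vol}(\mathscr{C}_{n}) : \mathscr{C}_{n}\in\mathcal{F}(\mathcal{B},\lambda),\ A\subset\bigcup_{n}\mathscr{C}_{n}\}$ ($\inf\varnothing=\infty$). Fix $1\le p<\infty$. Let $I:=\mathbb{Z}^{\mathbb{N}}$ and, for $\mathfrak{a}=(a_n)\in I$, $\mathcal{C}_{\mathfrak{a}}:=\prod_{n\in\mathbb{N}}[a_{n},a_{n}+1)$. For $f\in L^p(\mu)$ let $\mathcal{O}_{f}:=\{\mathfrak{a}\in I : \int_{\mathcal{C}_{\mathfrak{a}}}|f|^{p}\,d\mu\neq 0\}$ (a countable set) and $\mathcal{F}_{f}:=\bigsqcup_{\mathfrak{a}\in\mathcal{O}_{f}}\mathcal{C}_{\mathfrak{a}}$.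 Define $G^{p}:=\{f\in L^{p}(\mu) : \int_{\mathbb{R}^{\mathbb{N}}}|f|^{p}\,d\mu=\sum_{\mathfrak{a}\in\mathcal{O}_{f}}\int_{\mathcal{C}_{\mathfrak{a}}}|f|^{p}\,d\mu=\int_{\mathcal{F}_{f}}|f|^{p}\,d\mu\}$. *)

From HB Require Import structures.
From mathcomp Require Import all_boot all_order all_algebra.
From mathcomp Require Import all_classical all_reals all_analysis.
Set Implicit Arguments. Unset Strict Implicit. Unset Printing Implicit Defensive.
Import Order.TTheory GRing.Theory Num.Theory.
Import numFieldNormedType.Exports.
Local Open Scope classical_set_scope.
Local Open Scope ring_scope.

(* Sequences x = (x_n)_{n in N} in R^N are functions nat -> R
   (index set N represented by nat, starting at 0). *)

Section BakerMeasure.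
Variable R : realType.

Definition borel (C : set R) : Prop := @measurable _ (measurableTypeR R) C.
Definition leb (C : set R) : \bar R := @lebesgue_measure R C.

Definition rect (C : nat -> set R) : set (nat -> R) :=
  [set x | forall i, C i (x i)].

Definition cylinders : set (set (nat -> R)) :=
  [set A | exists (m : nat) (C : nat -> set R),
     (forall i, borel (C i)) /\ A = [set x | forall i, (i < m)%N -> C i (x i)]].

Definition RN := g_sigma_algebraType cylinders.

Definition partial_vol (C : nat -> set R) (n : nat) : \bar R :=
  (\prod_(i < n) leb (C i))%E.

Definition finite_rect (C : nat -> set R) : Prop :=
  (forall i, borel (C i)) /\
  exists l : R, partial_vol C @ \oo --> l%:E.

Definition vol (C : nat -> set R) : \bar R := lim (partial_vol C @ \oo).

(* outer measure mu^* (inf of empty set is +oo) *)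
Definition mu_star (A : set (nat -> R)) : \bar R :=
  ereal_inf [set (\sum_(0 <= n <oo) vol (S n))%E | S in
     [set S : nat -> nat -> set R |
        (forall n, finite_rect (S n)) /\ A `<=` \bigcup_n rect (S n)]].

(* mu := restriction of mu^* to B_infinity (as a set function on RN; the
   integral only ever evaluates it on B_infinity-measurable sets) *)
Definition mu : set RN -> \bar R := fun A => mu_star A.

Definition cube (a : nat -> int) : set RN :=
  [set x | forall n, (a n)%:~R <= x n < (a n)%:~R + 1].

Definition pint (p : R) (f : RN -> R) (D : set RN) : \bar R :=
  (\int[mu]_(x in D) (`|f x| `^ p)%:E)%E.

Definition Lp (p : R) : set (RN -> R) :=
  [set f | measurable_fun setT f /\ (pint p f setT < +oo)%E].

Definition O_f (p : R) (f : RN -> R) : set (nat -> int) :=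
  [set a | pint p f (cube a) <> 0%E].

Definition F_f (p : R) (f : RN -> R) : set RN :=
  \bigcup_(a in O_f p f) cube a.

Definition Gp (p : R) : set (RN -> R) :=
  [set f | Lp p f /\
     pint p f setT = (\esum_(a in O_f p f) pint p f (cube a))%E /\
     (\esum_(a in O_f p f) pint p f (cube a))%E = pint p f (F_f p f)].

End BakerMeasure.

(* The outer measure [mu_star] is the one induced by the volume of finite
   rectangles, and cutting a finite rectangle along one coordinate by a Borel
   set splits its volume additively; hence every cylinder is Caratheodory
   measurable and [mu] is a measure on B_infinity.  For f in L^p the identities
   defining G^p hold exactly when |f|^p vanishes almost everywhere outside
   countably many of the disjoint unit cubes (the cubes of positive mass are
   countable because their masses have a finite sum).  This condition is stable
   under sums, by taking the union of the two families of cubes, and under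
   scalar multiples, while L^p is a vector space by Minkowski's inequality. *)

From HB Require Import structures.
From mathcomp Require Import all_boot all_order all_algebra.
From mathcomp Require Import all_classical all_reals all_analysis.
From mathcomp Require Import finmap measurable_realfun.
Import Order.TTheory GRing.Theory Num.Theory.
Import numFieldNormedType.Exports.
Set Implicit Arguments. Unset Strict Implicit. Unset Printing Implicit Defensive.
Local Open Scope classical_set_scope.
Local Open Scope ring_scope.

Section finite_rectangles.
Variable R : realType.
Implicit Types C : nat -> set R.
Local Open Scope ereal_scope.

Lemma partial_vol_ge0 C n : 0 <= partial_vol C n.
Proof. by apply: prode_ge0 => i _; exact: measure_ge0. Qed.

Lemma vol_ge0 C : finite_rect C -> 0 <= vol C.
Proof.
move=> [_ [l Cl]]; apply: lime_ge; first by apply/cvg_ex; exists l%:E.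
by apply: nearW => n; exact: partial_vol_ge0.
Qed.

Lemma rect_inj C C' : rect C = rect C' -> rect C !=set0 -> C = C'.
Proof.
have sub D D' y i : rect D = rect D' -> rect D y -> D i `<=` D' i.
  move=> eDD' Dy t Dit; pose z k := if k == i then t else y k.
  have : rect D z by move=> k; rewrite /z; case: eqP => [->|_]//; exact: Dy.
  by rewrite eDD' => /(_ i); rewrite /z eqxx.
move=> eCC' [y Cy]; apply/funext => i; apply/seteqP; split; first exact: sub eCC' Cy.
by apply: sub (esym eCC') _; rewrite -eCC'.
Qed.

Lemma rect_set0 : rect (fun=> set0 : set R) = set0.
Proof. by apply/seteqP; split => x // /(_ 0%N). Qed.

Lemma partial_vol_set0_cvg : partial_vol (fun=> set0 : set R) @ \oo --> 0.
Proof.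
apply: cvg_near_cst; exists 1%N => // -[|n] //= _.
by rewrite /partial_vol big_ord_recl /leb measure0 mul0e.
Qed.

Lemma finite_rect_set0 : finite_rect (fun=> set0 : set R).
Proof.
split => [i|]; first exact: measurable0.
by exists 0%R; exact: partial_vol_set0_cvg.
Qed.

Lemma vol_set0 : vol (fun=> set0 : set R) = 0.
Proof. exact/cvg_lim/partial_vol_set0_cvg. Qed.

End finite_rectangles.

Section rectangle_premeasure.
Variable R : realType.
Local Open Scope ereal_scope.

Definition RN_powerset := g_sigma_algebraType (@setT (set (nat -> R))).

(* [+oo] off the finite rectangles; by [rect_inj] the infimum ranges over a
   single side sequence on every nonempty rectangle. *)
Definition rect_vol (B : set RN_powerset) : \bar R :=
  ereal_inf [set vol C | C in [set C | finite_rect C /\ rect C = B]].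

Lemma rect_vol_ge0 B : 0 <= rect_vol B.
Proof. by apply: le_ereal_inf_tmp => _ [C [fC _] <-]; exact: vol_ge0. Qed.

Lemma rect_vol_le C : finite_rect C -> rect_vol (rect C) <= vol C.
Proof. by move=> fC; apply: ereal_inf_lbound; exists C. Qed.

Lemma rect_vol0 : rect_vol set0 = 0.
Proof.
apply/eqP; rewrite eq_le rect_vol_ge0 andbT -(@vol_set0 R) -rect_set0.
exact/rect_vol_le/finite_rect_set0.
Qed.

Lemma rect_vol_attained B : rect_vol B < +oo ->
  exists C, [/\ finite_rect C, rect C = B & vol C = rect_vol B].
Proof.
have [->|/set0P[x Bx] Bfin] := eqVneq B set0.
  exists (fun=> set0); rewrite rect_vol0 vol_set0 rect_set0.
  by split => //; exact: finite_rect_set0.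
have [_ [C0 [fC0 eC0] _]] : [set vol C | C in [set C | finite_rect C /\ rect C = B]] !=set0.
  by apply/set0P/negP => /eqP e; move: Bfin; rewrite /rect_vol e ereal_inf0 ltxx.
exists C0; split => //.
rewrite /rect_vol [X in ereal_inf X](_ : _ = [set vol C0]) ?ereal_inf1//.
apply/seteqP; split => [_ [C [_ eC] <-]|_ ->]; last by exists C0.
suff -> : C = C0 by [].
by apply: rect_inj; [rewrite eC eC0 | exists x; rewrite eC].
Qed.

Lemma mu_star_mu_ext : @mu_star R = mu_ext rect_vol.
Proof.
have mB (B : set RN_powerset) : measurable B by exact: sub_sigma_algebra.
apply/funext => A; apply/eqP; rewrite eq_le; apply/andP; split.
- apply: le_ereal_inf_tmp => _ [F [_ AF] <-].
  have [[k Fk]|/forallNP Ffin] := pselect (exists k, rect_vol (F k) = +oo).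
    rewrite (@eseries_pinfty _ _ _ k) ?leey// => n _.
    by rewrite gt_eqF// (lt_le_trans _ (rect_vol_ge0 _)).
  have /choice[G HG] k :
      exists C, [/\ finite_rect C, rect C = F k & vol C = rect_vol (F k)].
    by apply: rect_vol_attained; rewrite ltey; apply/eqP; exact: Ffin.
  apply: ereal_inf_lbound; exists G.
    split; first by move=> n; have [] := HG n.
    by move=> x /AF[k _ Fkx]; exists k => //; have [_ -> _] := HG k.
  by apply: eq_eseriesr => k _; have [_ _ ->] := HG k.
- apply: le_ereal_inf_tmp => _ [S [fS AS] <-].
  apply: (@le_trans _ _ (\sum_(k <oo) rect_vol (rect (S k)))).
    by apply: ereal_inf_lbound; exists (fun k => rect (S k)).
  by apply: lee_nneseries => [k _ _|k _]; [exact: rect_vol_ge0 | exact: rect_vol_le].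
Qed.

End rectangle_premeasure.

Section split_limit.
Variable R : realType.
Local Open Scope ereal_scope.

Lemma cvge_splitDl (a1 a2 : \bar R) (u : nat -> \bar R) (L : R) :
  0 <= a1 -> 0 <= a2 -> (forall n, 0 <= u n) ->
  (fun n => (a1 + a2) * u n) @ \oo --> L%:E ->
  exists L1 L2 : R, [/\ (fun n => a1 * u n) @ \oo --> L1%:E,
    (fun n => a2 * u n) @ \oo --> L2%:E & (L1 + L2)%R = L].
Proof.
move=> a10 a20 u0 aL.
suff [null|[r1 [r2 [a1r a2r r0]]]] :
    (\forall n \near \oo, a1 * u n = 0 /\ a2 * u n = 0) \/
    exists r1 r2 : R, [/\ a1 = r1%:E, a2 = r2%:E & (0 < r1 + r2)%R].
- have aL0 : (fun n => (a1 + a2) * u n) @ \oo --> 0%:E.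
    apply: cvg_near_cst; apply: filterS null => n [a1u a2u].
    by rewrite ge0_muleDl// a1u a2u adde0.
  have L0 : L = 0%R by apply: EFin_inj; exact: cvg_unique _ aL aL0.
  exists 0%R, 0%R; rewrite L0 addr0.
  by split => //; apply: cvg_near_cst; apply: filterS null => n [].
- subst a1 a2; set c := ((r1 + r2)^-1 * L)%R.
  have uc : u @ \oo --> c%:E.
    have := cvgeZl (y := ((r1 + r2)^-1)%:E) isT aL.
    apply: cvg_trans; apply: near_eq_cvg; apply: nearW => n /=.
    by rewrite -EFinD muleA -EFinM mulVf ?gt_eqF// mul1e.
  exists (r1 * c)%R, (r2 * c)%R.
  split; rewrite ?EFinM; try exact: cvgeZl.
  by rewrite -mulrDl mulrA mulfV ?gt_eqF// mul1r.
(* A finite limit of [+oo * u n] forces [u n = 0] eventually. *)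
have [a_oo|a_fin] := eqVneq (a1 + a2) +oo.
  left; case/fine_cvgP: aL => + _; apply: filterS => n.
  have [->|un] := eqVneq (u n) 0; first by rewrite !mule0.
  by rewrite a_oo gt0_mulye// lt0e un u0.
move: a1 a2 a10 a20 a_fin {aL} => [r1| |] [r2| |] //=; rewrite !lee_fin => r10 r20 _.
have [r0|r0] := eqVneq (r1 + r2)%R 0%R.
  move/eqP: r0; rewrite paddr_eq0// => /andP[/eqP-> /eqP->].
  by left; apply: nearW => n; rewrite mul0e.
by right; exists r1, r2; rewrite lt0r r0 addr_ge0.
Qed.

End split_limit.

Section splitting_rectangles.
Variable R : realType.
Implicit Types (C : nat -> set R) (B D : set R).
Local Open Scope ereal_scope.

Definition side_with C j D : nat -> set R := fun i => if i == j then D else C i.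

Lemma side_with_id C j : side_with C j (C j) = C.
Proof. by apply/funext => i; rewrite /side_with; case: eqP => [->|]. Qed.

Lemma partial_vol_side_with C j D n : (j < n)%N ->
  partial_vol (side_with C j D) n = leb D * \prod_(i < n | val i != j) leb (C i).
Proof.
move=> jn; rewrite /partial_vol (bigD1 (Ordinal jn)) //= /side_with eqxx.
congr (_ * _); apply: eq_big => i; first by rewrite -val_eqE.
by rewrite -val_eqE /= => /negbTE ->.
Qed.

Lemma finite_rect_split C j B : finite_rect C -> borel B ->
  [/\ finite_rect (side_with C j (C j `&` B)), finite_rect (side_with C j (C j `\` B))
    & vol (side_with C j (C j `&` B)) + vol (side_with C j (C j `\` B)) = vol C].
Proof.
move=> [bC [L CL]] bB.
have bCB : borel (C j `&` B) by apply: measurableI; [exact: bC | exact: bB].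
have bCB' : borel (C j `\` B) by apply: measurableD; [exact: bC | exact: bB].
have bside D : borel D -> forall i, borel (side_with C j D i).
  by move=> bD i; rewrite /side_with; case: eqP.
pose Q n := \prod_(i < n | val i != j) leb (C i).
have jn : \forall n \near \oo, (j < n)%N by exists j.+1.
have pv D : \forall n \near \oo, partial_vol (side_with C j D) n = leb D * Q n.
  by apply: filterS jn => n; exact: partial_vol_side_with.
have : (fun n => (leb (C j `&` B) + leb (C j `\` B)) * Q n) @ \oo --> L%:E.
  rewrite /leb addeC -measureDI; [|exact: bC|exact: bB].
  apply: cvg_trans CL.
  by apply: near_eq_cvg; apply: filterS (pv (C j)) => n; rewrite side_with_id.
have Q0 n : 0 <= Q n by apply: prode_ge0 => i _; exact: measure_ge0.
case/(cvge_splitDl (measure_ge0 _ _) (measure_ge0 _ _) Q0) => L1 [L2 [L1cvg L2cvg eL]].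
have side_cvg D (l : R) : (fun n => leb D * Q n) @ \oo --> l%:E ->
    partial_vol (side_with C j D) @ \oo --> l%:E.
  by move=> Dl; apply: cvg_trans Dl; apply: near_eq_cvg; apply: filterS (pv D) => n ->.
move/side_cvg in L1cvg; move/side_cvg in L2cvg.
split.
- by split; [exact: bside bCB | exists L1; exact: L1cvg].
- by split; [exact: bside bCB' | exists L2; exact: L2cvg].
- by rewrite /vol !(cvg_lim (@ereal_hausdorff R) L1cvg, cvg_lim (@ereal_hausdorff R) L2cvg,
    cvg_lim (@ereal_hausdorff R) CL) -eL.
Qed.

End splitting_rectangles.

Section product_measure.
Variable R : realType.
Local Open Scope ereal_scope.

Lemma mu_star0 : mu_star set0 = 0 :> \bar R.
Proof. by rewrite mu_star_mu_ext; exact: mu_ext0 (@rect_vol0 R) (@rect_vol_ge0 R). Qed.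

Lemma mu_star_ge0 (A : set (nat -> R)) : 0 <= mu_star A.
Proof. by rewrite mu_star_mu_ext; exact: (mu_ext_ge0 (@rect_vol_ge0 R) A). Qed.

Lemma le_mu_star : {homo @mu_star R : A B / A `<=` B >-> A <= B}.
Proof. by rewrite mu_star_mu_ext; exact: (le_mu_ext (@rect_vol R)). Qed.

Lemma mu_star_sigma_subadditive : sigma_subadditive (@mu_star R).
Proof. by rewrite mu_star_mu_ext; exact: mu_ext_sigma_subadditive (@rect_vol_ge0 R). Qed.

HB.instance Definition _ := isOuterMeasure.Build R (nat -> R) (@mu_star R)
  mu_star0 mu_star_ge0 le_mu_star mu_star_sigma_subadditive.

(* Splitting each rectangle of a cover along coordinate [j] covers both halves
   at the same total volume. *)
Lemma caratheodory_coord_preimage j (B : set R) : borel B ->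
  (@mu_star R).-caratheodory ((fun x => x j) @^-1` B).
Proof.
move=> bB; apply: le_caratheodory_measurable => X.
suff : mu_star (X `&` (fun x => x j) @^-1` B) +
       mu_star (X `&` ~` ((fun x => x j) @^-1` B)) <= mu_star X by [].
rewrite [in leRHS]/mu_star; apply: le_ereal_inf_tmp => _ [S [fS XS] <-].
have split_S k := finite_rect_split j (fS k) bB.
have cover (D : set R) : (forall k, finite_rect (side_with (S k) j (S k j `&` D))) ->
    mu_star (X `&` (fun x => x j) @^-1` D) <=
    \sum_(k <oo) vol (side_with (S k) j (S k j `&` D)).
  move=> fSD; apply: ereal_inf_lbound.
  exists (fun k => side_with (S k) j (S k j `&` D)) => //; split => // x [/XS[k _ Skx] Dx].
  by exists k => // i; rewrite /side_with; case: eqP => [->|_]; [split|].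
pose T1 k := side_with (S k) j (S k j `&` B).
pose T2 k := side_with (S k) j (S k j `\` B).
have fT1 k : finite_rect (T1 k) by case: (split_S k).
have fT2 k : finite_rect (T2 k) by case: (split_S k).
have eT k : vol (T1 k) + vol (T2 k) = vol (S k) by case: (split_S k).
apply: (le_trans (leeD (cover B fT1) (cover (~` B) fT2))).
rewrite -nneseriesD => [|k _ _|k _ _]; [|exact: vol_ge0 (fT1 k)|exact: vol_ge0 (fT2 k)].
apply: lee_nneseries => [k _ _|k _]; last by rewrite eT.
exact: adde_ge0 (vol_ge0 (fT1 k)) (vol_ge0 (fT2 k)).
Qed.

Lemma caratheodory_cylinder A : cylinders A -> (@mu_star R).-caratheodory A.
Proof.
move=> [m [C [bC ->]]]; elim: m => [|m IHm].
  rewrite (_ : [set x | _] = ~` set0); last by apply/seteqP; split => x // _ [].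
  exact/caratheodory_measurable_setC/caratheodory_measurable_set0.
rewrite (_ : [set x | _] = [set x | forall i, (i < m)%N -> C i (x i)] `&`
                           (fun x => x m) @^-1` C m).
  exact: caratheodory_measurable_setI IHm (caratheodory_coord_preimage _ (bC m)).
apply/seteqP; split => [x Cx|x [Cx Cmx] i]; first by split => [i /ltnW|]; exact: Cx.
by rewrite ltnS leq_eqVlt => /predU1P[->|]; [exact: Cmx | exact: Cx].
Qed.

Lemma caratheodory_RN (A : set (RN R)) : measurable A -> (@mu_star R).-caratheodory A.
Proof.
move=> mA; apply: (smallest_sub _ _ mA) => [|B /caratheodory_cylinder//].
exact: (@sigma_algebra_measurable _ (caratheodory_type (@mu_star R))).
Qed.

Lemma mu_sigma_additive : semi_sigma_additive (@mu R).
Proof.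
move=> F mF tF mU.
exact: caratheodory_measure_sigma_additive (fun i => caratheodory_RN (mF i)) tF
  (caratheodory_RN mU).
Qed.

HB.instance Definition _ := isMeasure.Build _ (RN R) R (@mu R)
  mu_star0 mu_star_ge0 mu_sigma_additive.

End product_measure.

Section esum_countable.
Context (R : realType) (T : choiceType).
Local Open Scope ereal_scope.

(* Only finitely many terms exceed [1/(n+1)], for each [n]. *)
Lemma esum_lty_countable (S : set T) (a : T -> \bar R) :
  (forall t, S t -> 0 < a t) -> \esum_(t in S) a t < +oo -> countable S.
Proof.
move=> a0 Sa; have Sa0 : 0 <= \esum_(t in S) a t by apply: esum_ge0 => t /a0/ltW.
set r := fine (\esum_(t in S) a t).
have Sar : \esum_(t in S) a t = r%:E by rewrite fineK// ge0_fin_numE.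
pose S_ n := [set t | S t /\ (n.+1%:R^-1)%:E < a t].
have -> : S = \bigcup_n S_ n.
  apply/seteqP; split => [t St|t [n _ []]//].
  have := a0 t St; case ta : (a t) => [s||] //; last first.
    by exists 0%N => //; split; rewrite ?ta ?ltry.
  rewrite lte_fin => s0; exists (Num.truncn s^-1) => //; split => //.
  by rewrite ta lte_fin invf_plt ?unfold_in//= ?ltr0n//; exact: truncnS_gt.
apply: bigcup_countable => // n _; apply: finite_set_countable; apply: contrapT => Sinf.
have [k kgt] : exists k : nat, (r * n.+1%:R < k%:R)%R.
  by exists (Num.truncn (r * n.+1%:R)).+1; exact: truncnS_gt.
have [B BS kB] := infinite_set_fset k Sinf.
suff : (k%:R / n.+1%:R)%:E <= r%:E by rewrite lee_fin ler_pdivrMr// leNgt kgt.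
rewrite -Sar; apply: esum_ge; exists [set` B].
  by split; [exact: finite_fset | move=> t /BS[]].
apply: (@le_trans _ _ (\sum_(t \in [set` B]) (n.+1%:R^-1)%:E)); last first.
  by apply: lee_fsum => // t /BS[_ /ltW].
rewrite fsbig_finite//= set_fsetK sumEFin lee_fin big_const_seq /= count_predT.
by rewrite iter_addr_0 -[leRHS]mulr_natl ler_pM2r ?invr_gt0 ?ltr0n// ler_nat.
Qed.

End esum_countable.

Lemma countable_nat_image (T : Type) (K : set T) : countable K -> K != set0 ->
  exists e : nat -> T, exists2 N : set nat, K = e @` N & set_inj N e.
Proof.
move=> /countable_injP[f injf] /set0P[k0 _]; exists (pinv_ (fun=> k0) K f), (f @` K).
  by rewrite injpinv_image.
move=> _ _ /set_mem[a Ka <-] /set_mem[b Kb <-].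
by rewrite (pinvKV _ injf (mem_set Ka)) (pinvKV _ injf (mem_set Kb)) => ->.
Qed.

Section countable_partition.
Context d (T : measurableType d) (R : realType) (mu : {measure set T -> \bar R}).
Context (I : choiceType) (P : I -> set T).
Hypotheses (mP : forall i, measurable (P i)) (tP : trivIset setT P).
Variable g : T -> \bar R.
Hypotheses (mg : measurable_fun setT g) (g0 : forall x, (0 <= g x)%E).
Local Open Scope ereal_scope.

Lemma measurable_bigcup_countable K : countable K -> measurable (\bigcup_(i in K) P i).
Proof.
move=> cK; have [->|K0] := eqVneq K set0; first by rewrite bigcup_set0.
have [e [N -> _]] := countable_nat_image cK K0.
by rewrite bigcup_image; apply: bigcup_measurable => i _.
Qed.

Lemma ge0_integral_bigcup_countable K : countable K ->
  \int[mu]_(x in \bigcup_(i in K) P i) g x = \esum_(i in K) \int[mu]_(x in P i) g x.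
Proof.
move=> cK; have [->|K0] := eqVneq K set0.
  by rewrite bigcup_set0 integral_set0 esum_set0.
have [e [N -> injN]] := countable_nat_image cK K0.
rewrite esum_image // bigcup_image bigcup_mkcond ge0_integral_bigcup //.
- transitivity (\sum_(n <oo | n \in N) \int[mu]_(x in P (e n)) g x).
    rewrite [RHS]eseries_mkcond; apply: eq_eseriesr => n _.
    by case: ifPn => // _; rewrite integral_set0.
  by rewrite nneseries_esum ?set_mem_set// => n _; exact: integral_ge0.
- by move=> n; case: ifPn => _; [exact: mP | exact: measurable0].
- exact: measurable_funTS.
- apply/trivIsetP => m n _ _ mn.
  case: ifPn => [Nm|_]; last by rewrite set0I.
  case: ifPn => [Nn|_]; last by rewrite setI0.
  by move/trivIsetP : tP; apply => //; apply: contra_neq mn; exact: injN.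
Qed.

Let integral_eq0P D : measurable D ->
  \int[mu]_(x in D) g x = 0 <-> ae_eq mu D g (cst 0).
Proof.
move=> mD; rewrite -ae_eq_integral_abs//; last exact: measurable_funTS.
by rewrite (eq_integral g) // => x _; rewrite gee0_abs.
Qed.

Let integral_splitC A : measurable A ->
  \int[mu]_x g x = \int[mu]_(x in A) g x + \int[mu]_(x in ~` A) g x.
Proof.
move=> mA; rewrite -ge0_integral_setU ?setUCr//; first exact: measurableC.
by apply/disj_set2P; rewrite setICr.
Qed.

Definition nonnull_pieces := [set i | \int[mu]_(x in P i) g x <> 0].

Lemma integral_esum_nonnull_pieces K : countable K ->
    ae_eq mu (~` \bigcup_(i in K) P i) g (cst 0) ->
  \int[mu]_x g x = \esum_(i in nonnull_pieces) \int[mu]_(x in P i) g x /\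
  \esum_(i in nonnull_pieces) \int[mu]_(x in P i) g x =
    \int[mu]_(x in \bigcup_(i in nonnull_pieces) P i) g x.
Proof.
move=> cK gK.
have null i : ~ K i -> \int[mu]_(x in P i) g x = 0.
  move=> Ki; apply/integral_eq0P => //; apply: filterS gK => x gx Pix; apply: gx.
  move=> [k Kk Pkx]; have ik : i != k by apply: contra_notN Ki => /eqP->.
  have : (P i `&` P k) x by [].
  by move/trivIsetP : tP => /(_ i k Logic.I Logic.I ik) ->.
have nK : nonnull_pieces `<=` K by move=> i ni; apply: contrapT => /null.
have cN : countable nonnull_pieces := sub_countable (subset_card_le nK) cK.
rewrite -ge0_integral_bigcup_countable//; split=> //.
have mU := measurable_bigcup_countable cK.
rewrite (integral_splitC mU) (proj2 (integral_eq0P (measurableC mU)) gK) adde0.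
rewrite ge0_integral_bigcup_countable// (esumID nonnull_pieces); last first.
  by move=> i _; exact: integral_ge0.
rewrite [X in _ + X]esum1 => [|i [_ ni]]; last exact: contrapT ni.
by rewrite adde0 setIidr // ge0_integral_bigcup_countable.
Qed.

Lemma nonnull_pieces_countable_null_outside : \int[mu]_x g x < +oo ->
    \int[mu]_x g x = \esum_(i in nonnull_pieces) \int[mu]_(x in P i) g x ->
  countable nonnull_pieces /\ ae_eq mu (~` \bigcup_(i in nonnull_pieces) P i) g (cst 0).
Proof.
move=> gfin gN.
have cN : countable nonnull_pieces.
  apply: (esum_lty_countable (a := fun i => \int[mu]_(x in P i) g x)).
    by move=> i /eqP ni; rewrite lt0e ni integral_ge0.
  by rewrite -gN.
have mU := measurable_bigcup_countable cN.
split=> //; apply/integral_eq0P; first exact: measurableC.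
have gU : \int[mu]_(x in \bigcup_(i in nonnull_pieces) P i) g x = \int[mu]_x g x.
  by rewrite ge0_integral_bigcup_countable.
have gfin' : \int[mu]_x g x \is a fin_num by rewrite ge0_fin_numE// integral_ge0.
move: (integral_splitC mU); rewrite gU => /esym/(congr1 (fun z => z - \int[mu]_x g x)).
by rewrite addeAC subee// add0e.
Qed.

End countable_partition.

Lemma countableU T (A B : set T) : countable A -> countable B -> countable (A `|` B).
Proof.
by move=> cA cB; rewrite -bigcup2inE; apply: bigcup_countable => [|[|[|]]].
Qed.

Section unit_cubes.
Variable R : realType.

Lemma measurable_cube (a : nat -> int) : measurable (cube a : set (RN R)).
Proof.
pose slab n : set R := [set r | (a n)%:~R <= r < (a n)%:~R + 1].
have -> : cube a = \bigcap_n (fun x : RN R => x n) @^-1` slab n.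
  by apply/seteqP; split => [x ax n _|x ax n]; [exact: ax | exact: ax n Logic.I].
apply: bigcapT_measurable => n; apply: sub_sigma_algebra.
exists n.+1, (fun i => if i == n then slab n else setT); split.
  move=> i; case: eqP => _; last exact: measurableT.
  have -> : slab n = `[(a n)%:~R, (a n)%:~R + 1[%classic.
    by apply/seteqP; split => r; rewrite /= in_itv.
  exact: measurable_itv.
apply/seteqP; split => [x sx i _|x /(_ n (ltnSn n))]; last by rewrite eqxx.
by case: eqP => // ->.
Qed.

Lemma trivIset_cube : trivIset setT (@cube R).
Proof.
apply/trivIsetP => a b _ _ /eqP ab; apply/seteqP; split => // x [ax bx]; apply: ab.
apply/funext => n; have /andP[a1 a2] := ax n; have /andP[b1 b2] := bx n.
have ab1 : a n < b n + 1 by rewrite -(ltr_int R) intrD (le_lt_trans a1 b2).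
have ba1 : b n < a n + 1 by rewrite -(ltr_int R) intrD (le_lt_trans b1 a2).
by apply/eqP; rewrite eq_le -!ltzD1 ab1 ba1.
Qed.

End unit_cubes.

Section Gp_characterization.
Variables (R : realType) (p : R).
Hypothesis p_gt0 : 0 < p.
Implicit Type f : RN R -> R.
Local Open Scope ereal_scope.

Lemma Lp_Lfun f : Lp p f <-> f \in Lfun (@mu R) p%:E.
Proof.
have NE : 'N[@mu R]_p%:E[EFin \o f] `^ p = pint p f setT by rewrite poweR_Lnorm ?gt_eqF.
rewrite inE; split => [[mf fp]|/andP[/set_mem mf /set_mem fp]].
  apply/andP; split; apply: mem_set => //.
  by apply: (lty_poweRy (lt0r_neq0 p_gt0)); rewrite NE.
by split=> //; rewrite -NE poweR_lty.
Qed.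

Let powR_normr_eq0 (r : R) : (`|r| `^ p == 0)%R = (r == 0)%R.
Proof. by rewrite powR_eq0 normr_eq0 (lt0r_neq0 p_gt0) andbT. Qed.

Lemma GpP f : Gp p f <->
  Lp p f /\ exists2 K, countable K & ae_eq (@mu R) (~` \bigcup_(a in K) cube a) f (cst 0%R).
Proof.
pose g x := (`|f x| `^ p)%:E.
have g0 x : 0 <= g x by rewrite lee_fin powR_ge0.
have mg : measurable_fun setT f -> measurable_fun setT g.
  move=> mf; apply/measurable_EFinP/(measurableT_comp (measurable_powR p)).
  exact: measurableT_comp.
have ae_g K : ae_eq (@mu R) (~` \bigcup_(a in K) cube a) g (cst 0) <->
              ae_eq (@mu R) (~` \bigcup_(a in K) cube a) f (cst 0%R).
  split; apply: filterS => x gfx Kx; last by rewrite /g /= gfx ?normr0 ?powR0 ?lt0r_neq0.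
  by apply/eqP; rewrite -powR_normr_eq0; apply/eqP/EFin_inj/gfx.
split => [[[mf ffin] [gN _]]|[[mf ffin] [K cK /ae_g gK]]].
  have [cN /ae_g fN] := nonnull_pieces_countable_null_outside (@measurable_cube R)
    (@trivIset_cube R) (mg mf) g0 ffin gN.
  by split => //; exists (O_f p f).
have [gN gF] := integral_esum_nonnull_pieces (@measurable_cube R)
  (@trivIset_cube R) (mg mf) g0 cK gK.
by split.
Qed.

End Gp_characterization.

Section Gp_subspace.
Variables (R : realType) (p : R).
Hypothesis p_ge1 : 1 <= p.
Implicit Type f : RN R -> R.

Let p_gt0 : 0 < p := lt_le_trans ltr01 p_ge1.

Lemma Gp0 : Gp p (fun=> 0).
Proof.
apply/(GpP p_gt0); split; first by apply/(Lp_Lfun p_gt0); exact: rpred0.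
by exists set0; [exact: countable0 | apply: aeW].
Qed.

Lemma GpD f g : Gp p f -> Gp p g -> Gp p (f \+ g).
Proof.
move=> /(GpP p_gt0)[/(Lp_Lfun p_gt0) Lf [Kf cKf fK]].
move=> /(GpP p_gt0)[/(Lp_Lfun p_gt0) Lg [Kg cKg gK]].
apply/(GpP p_gt0); split; first by apply/(Lp_Lfun p_gt0); exact: rpredD.
exists (Kf `|` Kg); first exact: countableU.
apply: filterS2 fK gK => x fK gK /= fg.
by rewrite fK ?gK ?addr0// => -[a Ka ax]; apply: fg; exists a => //; [right|left].
Qed.

Lemma GpZ c f : Gp p f -> Gp p (fun x => c * f x).
Proof.
move=> /(GpP p_gt0)[/(Lp_Lfun p_gt0) Lf [K cK fK]].
apply/(GpP p_gt0); split; first by apply/(Lp_Lfun p_gt0); exact: rpredZ.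
by exists K => //; apply: filterS fK => x fK Kx /=; rewrite fK ?mulr0.
Qed.

End Gp_subspace.

Theorem lemma3p3 (R : realType) (p : R) (hp : 1 <= p) :
  Gp p `<=` Lp p /\
  Gp p (fun _ => 0) /\
  (forall f g, Gp p f -> Gp p g -> Gp p (f \+ g)) /\
  (forall (c : R) f, Gp p f -> Gp p (fun x => c * f x)).
Proof.
split; first by move=> f [].
by split; [exact: Gp0 | split; [exact: GpD | exact: GpZ]].
Qed.
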